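(* The a priori Recursive Measure satisfies the strong minimum-power blocker postulate. For every SVG $\mathcal{G}=(N,\mathcal{W})$: (1) if $S\in\mathcal{W}$ and $b\in S$ is a YES-blocker, then $RM'_b\ge 1/|S|$; (2) if $T\notin\mathcal{W}$ and $b\in N\setminus T$ is a NO-blocker, then $RM'_b\ge 1/|N\setminus T|$. (Here $1$ is the RM value of a dictator in a dictator-rule game.)
   Context: A simple voting game (SVG) is a pair $\mathcal{G}=(N,\mathcal{W})$ with $N$ a nonempty finite set of $n$ players and $\mathcal{W}\subseteq 2^N$ monotone, $\emptyset\notin\mathcal{W}$, $N\in\mathcal{W}$. Divisions are identified with their YES-sets $S\subseteq N$. Decisiveness and success: - Player $k$ is YES-decisive in $S$ if $k\in S\in\mathcal{W}$ and $S\setminus\{k\}\notin\mathcal{W}$. - Player $k$ is NO-decisive in $S$ if $k\notin S\notin\mathcal{W}$ and $S\cup\{k\}\in\mathcal{W}$. - Player $k$ is successful in $S$ if ($k\in S\in\mathcal{W}$) or ($k\notin S\notin\mathcal{W}$). Loyal children: if $S\in\mathcal{W}$, they are the sets $S\setminus\{m\}\in\mathcal{W}$ with $m\in S$. If $S\notin\mathcal{W}$, they are the sets $S\cup\{m\}\notin\mathcal{W}$ with $m\notin S$. Recursive efficacy score $\alpha_k(S)$: - $\alpha_k(S)=1$ if $k$ is decisive; - $\alpha_k(S)=0$ if $k$ is not successful; - otherwise, the average of $\alpha_k$ over the loyal children of $S$. The a priori Recursive Measure is $RM'_k=2^{-n}\sum_{S\subseteq N}\alpha_k(S)$. Blockers: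 $b$ is a YES-blocker if $b\in S$ for all $S\in\mathcal{W}$, and a NO-blocker if $b\notin S$ for all $S\notin\mathcal{W}$. *)

(* Players: a finite type T (N = [set: T]); divisions = YES-sets S : {set T}. *)
From mathcomp Require Import all_boot all_order all_algebra.
Set Implicit Arguments. Unset Strict Implicit. Unset Printing Implicit Defensive.
Import Order.TTheory GRing.Theory Num.Theory.
Local Open Scope ring_scope.

Section SVG.
Variable T : finType.
Variable W : {set {set T}}.

Definition SVG : Prop :=
  [/\ forall S S' : {set T}, S \subset S' -> S \in W -> S' \in W,
      set0 \notin W & [set: T] \in W].

Definition yes_decisive (k : T) (S : {set T}) : bool :=
  [&& k \in S, S \in W & (S :\ k) \notin W].
Definition no_decisive (k : T) (S : {set T}) : bool :=
  [&& k \notin S, S \notin W & (k |: S) \in W].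
Definition decisive (k : T) (S : {set T}) : bool :=
  yes_decisive k S || no_decisive k S.
Definition successful (k : T) (S : {set T}) : bool :=
  ((k \in S) && (S \in W)) || ((k \notin S) && (S \notin W)).

Definition loyal_children (S : {set T}) : {set {set T}} :=
  if S \in W then [set S :\ m | m in [set m in S | (S :\ m) \in W]]
  else [set m |: S | m in [set m in ~: S | (m |: S) \notin W]].

(* Recursive efficacy score, computed with fuel; along any chain of loyal
   children the recursion stops after at most #|T| steps, so fuel #|T|.+1
   is enough and the value is the recursively defined alpha_k(S). *)
Fixpoint alpha_fuel (fuel : nat) (k : T) (S : {set T}) : rat :=
  if decisive k S then 1
  else if ~~ successful k S then 0
  else match fuel with
       | 0%N => 0
       | f.+1 => (\sum_(C in loyal_children S) alpha_fuel f k C)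
                   / (#|loyal_children S|)%:R
       end.

Definition alpha (k : T) (S : {set T}) : rat := alpha_fuel #|T|.+1 k S.

Definition RM' (k : T) : rat := (\sum_(S : {set T}) alpha k S) / (2 ^ #|T|)%:R.

Definition yes_blocker (b : T) : Prop := forall S : {set T}, S \in W -> b \in S.
Definition no_blocker (b : T) : Prop := forall S : {set T}, S \notin W -> b \notin S.

End SVG.

(* If b is a YES-blocker then every division X not containing b is losing and
   b is successful in it, b being NO-decisive exactly when b |: X wins.  By
   induction along loyal children, alpha_b(X) >= 1 / |S \ X| for such X: the
   loyal children are the losing m |: X, which include every m in S \ X.
   Divisions containing S are won with b YES-decisive, so alpha_b = 1 there.
   Since these bounds only depend on X :&: S, averaging gives, with s = |S|,
   RM'_b >= 2^-s (1 + sum_(Y <= S \ b) 1 / (s - |Y|)) = 2^-s (1 + (2^s - 1) / s),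
   which is at least 1 / s.  A NO-blocker of W is a YES-blocker of the dual game
   [set X | ~: X \notin W], whose scores on complemented divisions agree with
   those of W. *)

From mathcomp Require Import all_boot all_order all_algebra.
From mathcomp Require Import zify ring lra.
Import Order.TTheory GRing.Theory Num.Theory.
Set Implicit Arguments. Unset Strict Implicit. Unset Printing Implicit Defensive.
Local Open Scope ring_scope.

Lemma card_setD_setU1 (T : finType) (S X : {set T}) (m : T) :
  m \in S -> m \notin X -> #|S :\: X| = #|S :\: (m |: X)|.+1.
Proof.
move=> mS mX; rewrite (cardsD1 m (S :\: X)) inE mX mS add1n.
by rewrite setDDl setUC.
Qed.

Lemma setD_setU1_notin (T : finType) (S X : {set T}) (m : T) :
  m \notin S -> S :\: (m |: X) = S :\: X.
Proof.
move=> mS; apply/setP => x; rewrite !inE negb_or.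
by case: (eqVneq x m) => [->|]; rewrite ?(negbTE mS) ?andbF.
Qed.

Lemma setU1_inj_notin (T : finType) (X : {set T}) :
  {in ~: X &, injective (fun m => m |: X)}.
Proof.
move=> m m' mX m'X e; move: mX; rewrite inE.
by have := setU11 m X; rewrite e => /setU1P[|->].
Qed.

Lemma card_div_le_sum (I : finType) (A M : {set I}) (a : I) (F : I -> rat) :
  a \in A -> A \subset M -> (1 < #|A|)%N -> (forall i, 0 <= F i) ->
  (forall i, i \in A :\ a -> (#|A|.-1%:R)^-1 <= F i) ->
  (forall i, i \in M :\: A -> (#|A|%:R)^-1 <= F i) ->
  (#|A|%:R)^-1 * #|M|%:R <= \sum_(i in M) F i.
Proof.
move=> aA AM A2 F0 FA FMA.
rewrite -(cardsID A M) (setIidPr AM) (big_setID A) (setIidPr AM) natrD mulrDr /=.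
apply: lerD; last by rewrite mulrC mulr_natl -sumr_const; apply: ler_sum.
have cardA : #|A| = #|A :\ a|.+1 by rewrite (cardsD1 a A) aA.
rewrite mulVf ?pnatr_eq0 -?lt0n ?(ltnW A2) // (big_setD1 a aA) /=.
apply: le_trans (_ : \sum_(i in A :\ a) (#|A|.-1%:R)^-1 <= _); last first.
  by rewrite -[X in X <= _]add0r lerD // ler_sum.
rewrite sumr_const cardA /= -[_ *+ _]mulr_natr mulVf // pnatr_eq0 -lt0n -ltnS -cardA.
exact: A2.
Qed.

Section Alpha.
Variables (T : finType) (W : {set {set T}}).

Lemma alpha_fuel_decisive f k (X : {set T}) :
  decisive W k X -> alpha_fuel W f k X = 1.
Proof. by case: f => [|f] /= ->. Qed.

Lemma alpha_fuel_ge0 f k (X : {set T}) : 0 <= alpha_fuel W f k X.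
Proof.
elim: f X => [|f IH] X /=; case: (decisive W k X) => //; case: (~~ _) => //.
by rewrite divr_ge0 ?sumr_ge0.
Qed.

Lemma alpha_fuelS f k (X : {set T}) :
  ~~ decisive W k X -> successful W k X ->
  alpha_fuel W f.+1 k X =
  (\sum_(C in loyal_children W X) alpha_fuel W f k C) / #|loyal_children W X|%:R.
Proof. by move=> /negbTE /= -> ->. Qed.

Lemma loyal_children_losing (X : {set T}) : X \notin W ->
  loyal_children W X = [set m |: X | m in [set m in ~: X | m |: X \notin W]].
Proof. by rewrite /loyal_children => /negbTE ->. Qed.

End Alpha.

Lemma sumr_setI (T : finType) (S : {set T}) (F : {set T} -> rat) :
  \sum_(X : {set T}) F (X :&: S) =
  (2 ^ #|~: S|)%:R * \sum_(Y : {set T} | Y \subset S) F Y.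
Proof.
rewrite (partition_big (fun X => X :&: S) (fun Y => Y \subset S)) /=; last first.
  by move=> X _; apply: subsetIr.
rewrite big_distrr /=; apply: eq_bigr => Y YS.
rewrite (eq_bigr (fun _ => F Y)) => [|X /eqP -> //].
rewrite sumr_const mulr_natl -card_powerset; congr (_ *+ _).
have fiberE :
    [set X : {set T} | X :&: S == Y] = [set Y :|: Z | Z in powerset (~: S)].
  apply/setP => X; rewrite inE; apply/eqP/imsetP => [<-|[Z]].
    exists (X :&: ~: S); first by rewrite inE subsetIr.
    by rewrite -setIUr setUCr setIT.
  rewrite inE -disjoints_subset => /disjoint_setI0 ZS -> {X}.
  by rewrite setIUl (setIidPl YS) ZS setU0.
rewrite -[LHS]cardsE fiberE card_in_imset // => Z Z'.
have YS0 : Y :&: ~: S = set0.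
  by apply: disjoint_setI0; rewrite disjoints_subset setCK.
rewrite !inE => /setIidPl ZS /setIidPl Z'S /(congr1 (fun A => A :&: ~: S)).
by rewrite !setIUl ZS Z'S YS0 !set0U.
Qed.

Lemma sumr_subsets_by_card (T : finType) (U : {set T}) (f : nat -> rat) :
  \sum_(Y : {set T} | Y \subset U) f #|Y| =
  \sum_(j < #|U|.+1) 'C(#|U|, j)%:R * f j.
Proof.
have cardY (Y : {set T}) : Y \subset U -> (#|Y| < #|U|.+1)%N.
  by move=> YU; rewrite ltnS subset_leq_card.
rewrite (partition_big (fun Y : {set T} => inord #|Y| : 'I_#|U|.+1) predT) //=.
apply: eq_bigr => j _.
rewrite (eq_bigr (fun _ => f j)) => [|Y /andP[/cardY YU /eqP <-]]; last first.
  by rewrite inordK.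
rewrite (eq_bigl [in [set Y : {set T} | Y \subset U & #|Y| == j]]) => [|Y].
  by rewrite sumr_const cards_draws mulr_natl.
rewrite !inE; case: (boolP (Y \subset U)) => //= /cardY YU.
by rewrite -val_eqE /= inordK.
Qed.

Lemma sum_binomial_div (u : nat) :
  \sum_(j < u.+1) 'C(u, j)%:R / (u.+1 - j)%:R = ((2 ^ u.+1)%:R - 1) / u.+1%:R :> rat.
Proof.
have binE (j : 'I_u.+1) : 'C(u, u - j)%:R / (u.+1 - (u - j))%:R =
                          'C(u.+1, j.+1)%:R / u.+1%:R :> rat.
  have ju : (j <= u)%N by rewrite -ltnS.
  rewrite bin_sub // (_ : u.+1 - (u - j) = j.+1)%N; last by lia.
  apply/eqP; rewrite eqr_div ?pnatr_eq0 // -!natrM.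
  by rewrite [X in _ == X%:R]mulnC -mul_bin_diag mulnC.
rewrite (reindex_inj rev_ord_inj) /= (eq_bigr _ (fun j _ => binE j)) -mulr_suml.
have -> : (2 ^ u.+1 = \sum_(j < u.+2) 'C(u.+1, j))%N.
  rewrite -[X in (X ^ _)%N]/(1 + 1)%N expnDn.
  by apply: eq_bigr => j _; rewrite !exp1n !muln1.
by rewrite big_ord_recl bin0 natrD natr_sum addrAC subrr add0r.
Qed.

Section YesBlocker.
Variables (T : finType) (W : {set {set T}}) (S : {set T}) (b : T).
Hypotheses (svgW : SVG W) (SW : S \in W) (bS : b \in S) (yb : yes_blocker W b).

Let losing (X : {set T}) : b \notin X -> X \notin W.
Proof. by move=> bX; apply: contra bX => /yb. Qed.

Lemma decisive_yes_blocker (X : {set T}) :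
  b \notin X -> decisive W b X = (b |: X \in W).
Proof.
move=> bX; rewrite /decisive /yes_decisive /no_decisive (negbTE bX).
by rewrite (negbTE (losing bX)).
Qed.

Lemma successful_yes_blocker (X : {set T}) : b \notin X -> successful W b X.
Proof. by move=> bX; rewrite /successful (negbTE bX) (losing bX). Qed.

Lemma setD_subset_losing_extensions (X : {set T}) :
  b \notin X -> b |: X \notin W ->
  S :\: X \subset [set m in ~: X | m |: X \notin W].
Proof.
move=> bX bXW; apply/subsetP => m; rewrite !inE => /andP[mX mS]; rewrite mX /=.
have [-> // | mb] := eqVneq m b.
by apply: contraNN bX => /yb; rewrite !inE eq_sym (negbTE mb).
Qed.

Lemma two_le_card_setD (X : {set T}) :
  b \notin X -> b |: X \notin W -> (1 < #|S :\: X|)%N.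
Proof.
have [mono _ _] := svgW.
move=> bX; rewrite ltnNge; apply: contraNN => /card_le1_eqP SX1.
apply: mono SW; apply/subsetP => x xS; rewrite !inE.
case: (boolP (x \in X)) => xX; rewrite ?orbT // (SX1 x b) ?eqxx //.
- by rewrite inE xX.
- by rewrite inE bX.
Qed.

Lemma alpha_fuel_yes_blocker f (X : {set T}) :
  b \notin X -> (#|~: X| <= f.+1)%N -> (#|S :\: X|%:R)^-1 <= alpha_fuel W f b X.
Proof.
elim: f X => [|f IH] X bX Xf.
all: have [dec|ndec] := boolP (decisive W b X);
  first by rewrite alpha_fuel_decisive // invf_le1 ?ltr0n ?ler1n;
    apply/card_gt0P; exists b; rewrite inE bX.
all: have bXW : b |: X \notin W by rewrite -decisive_yes_blocker.
all: have S2 := two_le_card_setD bX bXW.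
  by have := subset_leq_card (subsetIr S (~: X)); rewrite -setDE; lia.
rewrite alpha_fuelS ?successful_yes_blocker // loyal_children_losing ?losing //.
set M := [set m in ~: X | _].
have MX : {in M &, injective (fun m => m |: X)}.
  by apply: sub_in2 (@setU1_inj_notin _ X) => m; rewrite inE => /andP[].
rewrite big_imset //= card_in_imset // ler_pdivlMr; last first.
  by rewrite ltr0n; apply/card_gt0P; exists b; rewrite !inE bX.
have bSX : b \in S :\: X by rewrite inE bX.
(* The child b |: X scores 0; the children m |: X with m in S :\: X :\ b
   have the better bound 1 / (k - 1), which compensates for it. *)
apply: (card_div_le_sum bSX (setD_subset_losing_extensions bX bXW) S2) => m.
- exact: alpha_fuel_ge0.
- rewrite !inE => /andP[mb /andP[mX mS]].
  rewrite (card_setD_setU1 mS mX) /=; apply: IH.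
    by rewrite !inE negb_or eq_sym mb.
  by move: Xf; rewrite -!setTD (card_setD_setU1 (in_setT m) mX).
- rewrite !inE => /andP[+ /andP[mX _]]; rewrite mX /= => mS.
  have mb : b != m by apply: contraNneq mS => <-.
  rewrite -(setD_setU1_notin X mS); apply: IH; first by rewrite !inE negb_or mb.
  by move: Xf; rewrite -!setTD (card_setD_setU1 (in_setT m) mX).
Qed.

Let yes_bound (X : {set T}) : rat :=
  if b \in X then (S \subset X)%:R else (#|S :\: X|%:R)^-1.

Lemma alpha_ge_yes_bound (X : {set T}) : yes_bound X <= alpha W b X.
Proof.
have [mono _ _] := svgW.
rewrite /yes_bound; case: ifPn => bX; last first.
  by apply: alpha_fuel_yes_blocker; rewrite // !leqW ?max_card.
have [SX|_] := boolP (S \subset X); last exact: (alpha_fuel_ge0 W).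
rewrite /alpha alpha_fuel_decisive // /decisive /yes_decisive bX (mono S) //=.
by apply/orP; left; apply/negP => /yb; rewrite setD11.
Qed.

Lemma yes_bound_setI (X : {set T}) : yes_bound (X :&: S) = yes_bound X.
Proof.
by rewrite /yes_bound inE bS andbT subsetI subxx andbT setDIr setDv setU0.
Qed.

Lemma sum_yes_bound :
  \sum_(Y : {set T} | Y \subset S) yes_bound Y = 1 + ((2 ^ #|S|)%:R - 1) / #|S|%:R.
Proof.
rewrite (bigID (fun Y : {set T} => b \in Y)) /=; congr (_ + _).
  rewrite (bigD1 S) /= ?subxx ?bS // big1 => [|Y /andP[/andP[YS bY] YnS]].
    by rewrite addr0 /yes_bound bS subxx.
  rewrite /yes_bound bY; case: (boolP (S \subset Y)) => // SY.
  by rewrite eqEsubset YS SY in YnS.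
rewrite (eq_bigl (fun Y : {set T} => Y \subset S :\ b)) => [|Y]; last first.
  by rewrite subsetD1.
rewrite (eq_bigr (fun Y : {set T} => (#|S| - #|Y|)%:R^-1)) => [|Y]; last first.
  by rewrite subsetD1 => /andP[YS /negbTE bY]; rewrite /yes_bound bY cardsDS.
rewrite (sumr_subsets_by_card _ (fun j => (#|S| - j)%:R^-1)) (cardsD1 b S) bS.
exact: sum_binomial_div.
Qed.

Lemma RM'_yes_blocker : (#|S|%:R)^-1 <= RM' W b.
Proof.
rewrite /RM'.
apply: le_trans (_ : (\sum_X yes_bound (X :&: S)) / (2 ^ #|T|)%:R <= _).
  rewrite sumr_setI sum_yes_bound -(cardsC S) addnC expnD natrM.
  have s1 : 1 <= #|S|%:R :> rat by rewrite ler1n; apply/card_gt0P; exists b.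
  have q1 : 1 <= (2 ^ #|S|)%:R :> rat by rewrite ler1n expn_gt0.
  have p0 : 0 < (2 ^ #|~: S|)%:R :> rat by rewrite ltr0n expn_gt0.
  rewrite -subr_ge0 -mulf_div divff ?lt0r_neq0 // mul1r.
  rewrite (_ : _ - _ = (#|S|%:R - 1) / (#|S|%:R * (2 ^ #|S|)%:R)); last first.
    by field; rewrite ?lt0r_neq0 //; lra.
  by rewrite divr_ge0 ?mulr_ge0 //; lra.
rewrite ler_pM2r ?invr_gt0 ?ltr0n ?expn_gt0 //; apply: ler_sum => X _.
by rewrite yes_bound_setI alpha_ge_yes_bound.
Qed.

End YesBlocker.

Section Dual.
Variables (T : finType) (W : {set {set T}}).

Definition dual_game : {set {set T}} := [set X | ~: X \notin W].

Lemma in_dual_game (X : {set T}) : (X \in dual_game) = (~: X \notin W).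
Proof. by rewrite inE. Qed.

Lemma SVG_dual : SVG W -> SVG dual_game.
Proof.
move=> [mono W0 WT]; split; rewrite ?in_dual_game ?setC0 ?setCT ?WT ?W0 //.
by move=> A B AB; rewrite !in_dual_game; apply: contra; apply: mono; rewrite setCS.
Qed.

Lemma setCD1C (k : T) (X : {set T}) : ~: (~: X :\ k) = k |: X.
Proof. by rewrite setCD setCK setUC. Qed.

Lemma setCU1C (k : T) (X : {set T}) : ~: (k |: ~: X) = X :\ k.
Proof. by rewrite setCU setCK setIC setDE. Qed.

Lemma decisive_dual k (X : {set T}) :
  decisive dual_game k (~: X) = decisive W k X.
Proof.
rewrite /decisive /yes_decisive /no_decisive !in_dual_game setCK setCD1C setCU1C.
by rewrite !inE !negbK orbC.
Qed.

Lemma successful_dual k (X : {set T}) :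
  successful dual_game k (~: X) = successful W k X.
Proof. by rewrite /successful in_dual_game !inE setCK !negbK orbC. Qed.

Lemma loyal_children_dual (X : {set T}) :
  loyal_children dual_game (~: X) = [set ~: C | C in loyal_children W X].
Proof.
rewrite /loyal_children in_dual_game setCK.
case: (X \in W) => /=; rewrite -imset_comp.
  have -> : [set m in X | m |: ~: X \notin dual_game] =
            [set m in X | X :\ m \in W].
    by apply/setP => m; rewrite !inE negbK setCU1C.
  by apply: eq_imset => m /=; rewrite -setCU1C setCK.
have -> : [set m in ~: X | ~: X :\ m \in dual_game] =
          [set m in ~: X | m |: X \notin W].
  by apply/setP => m; rewrite !inE setCD1C.
by apply: eq_imset => m /=; rewrite -setCD1C setCK.
Qed.

Lemma alpha_fuel_dual f k (X : {set T}) :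
  alpha_fuel dual_game f k (~: X) = alpha_fuel W f k X.
Proof.
elim: f X => [|f IH] X /=; rewrite decisive_dual successful_dual //.
rewrite loyal_children_dual big_imset /=; last by move=> A B _ _; apply: setC_inj.
by rewrite card_imset; [under eq_bigr do rewrite IH | apply: setC_inj].
Qed.

Lemma RM'_dual k : RM' dual_game k = RM' W k.
Proof.
rewrite /RM' (reindex_inj (@setC_inj T)) /=; congr (_ / _).
by apply: eq_bigr => X _; rewrite /alpha alpha_fuel_dual.
Qed.

Lemma yes_blocker_dual b : no_blocker W b -> yes_blocker dual_game b.
Proof. by move=> nb X; rewrite in_dual_game => /nb; rewrite inE negbK. Qed.

End Dual.

Theorem theorem6 (T : finType) (W : {set {set T}}) :
  SVG W ->
  (forall (S : {set T}) (b : T), S \in W -> b \in S -> yes_blocker W b ->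
     1 / (#|S|)%:R <= RM' W b) /\
  (forall (S : {set T}) (b : T), S \notin W -> b \in ~: S -> no_blocker W b ->
     1 / (#|~: S|)%:R <= RM' W b).
Proof.
move=> svgW; split=> S b SW bS blocker; rewrite div1r.
  exact: RM'_yes_blocker.
rewrite -RM'_dual; apply: RM'_yes_blocker => //.
- exact: SVG_dual.
- by rewrite in_dual_game setCK.
- exact: yes_blocker_dual.
Qed.
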